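(* Let $k\ge 1$ and let $\mathcal{M}=\{q_1,\dots,q_k\}$ be a finite set of odd primes. Then there exists $n_{\mathcal{M}}\in\mathbb{N}$ such that for every integer $N\ge n_{\mathcal{M}}$ there exists a sequence of $N$ consecutive integers $a, a+1,\dots,a+N-1$ such that no member of the sequence is relatively prime to the product of all the other members. Moreover, for each member $x$ of the sequence, the greatest common divisor of $x$ and the product of all the other members is divisible by some prime $p$ with $p\notin\mathcal{M}$. *)

From mathcomp Require Import all_boot all_order all_algebra.
Set Implicit Arguments. Unset Strict Implicit. Unset Printing Implicit Defensive.
Import Order.TTheory GRing.Theory Num.Theory.
Local Open Scope ring_scope.

Definition prod_others (a : int) (N i : nat) : int :=
  \prod_(j < N | (j : nat) != i) (a + j%:Z).

(* Place the centre W = (N-1)/2 of the block c, ..., c + N - 1 and choose c by the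
   Chinese remainder theorem.  Requiring c + W odd makes c + i even whenever i - W is
   odd, and then c + i +- 2 is even too.  Requiring p | c + W for every odd prime
   p outside M with 2p <= N/2 covers every i with p | i - W, its partner being i +- p.
   The remaining distances d = |i - W| are even and have no such prime factor; an odd
   prime r outside M dividing d would give 2r <= d <= N/2, so d is 0 or a power of 2
   times an M-smooth number, which leaves only O((log N)^(k+1)) positions.  Each of them
   gets its own prime r in (N/4, N/2] with r | c + i, and Erdos's estimate of the
   central binomial coefficient shows that there are enough such primes, all outside
   M once N is large. *)

From mathcomp Require Import all_boot all_order all_algebra zify.
Set Implicit Arguments. Unset Strict Implicit. Unset Printing Implicit Defensive.

Lemma leq_expn2r m n e : m <= n -> m ^ e <= n ^ e.
Proof. by case: e => [//|e] le_mn; rewrite leq_exp2r. Qed.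

(** * Primes between N/4 and N/2 *)

Lemma leq_bin_exp2 n i : 0 < n -> 'C(n, i) <= 2 ^ n.-1.
Proof.
elim: n i => [//|n IH] [|i] _; first by rewrite bin0 expn_gt0.
case: n IH => [|n] IH; first by case: i.
by rewrite binS /= expnS mul2n -addnn leq_add ?IH.
Qed.

Lemma leq_bin_central n m : 'C(n.*2, m) <= 'C(n.*2, n).
Proof.
have incr k : k < n -> 'C(n.*2, k) <= 'C(n.*2, k.+1).
  move=> lt_kn; rewrite -(leq_pmul2l (ltn0Sn k)) mul_bin_left leq_mul2r.
  by apply/orP; right; lia.
have below d : 'C(n.*2, n - d) <= 'C(n.*2, n).
  elim: d => [|d IH]; first by rewrite subn0.
  case: (leqP n d) => [le_nd|lt_dn]; first by rewrite (_ : n - d.+1 = n - d) //; lia.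
  by apply: leq_trans IH; rewrite (_ : n - d = (n - d.+1).+1); [apply: incr|]; lia.
case: (leqP m n) => [le_mn|lt_nm]; first by rewrite -(subKn le_mn) below.
case: (leqP m n.*2) => [le_m2n|lt_2nm]; last by rewrite bin_small.
by rewrite -bin_sub // (_ : n.*2 - m = n - (m - n)) ?below //; lia.
Qed.

Lemma exp4_le_central_bin n : 4 ^ n <= n.*2.+1 * 'C(n.*2, n).
Proof.
have -> : 4 ^ n = \sum_(i < n.*2.+1) 'C(n.*2, i).
  rewrite -[4]/(2 ^ 2) -expnM mulnC muln2 -[2]/(1 + 1) expnDn.
  by apply: eq_bigr => i _; rewrite !exp1n !muln1.
rewrite -[X in _ <= X * _]card_ord -sum_nat_const.
by apply: leq_sum => i _; apply: leq_bin_central.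
Qed.

Lemma coprime_fact p j : prime p -> j < p -> coprime p j`!.
Proof.
move=> p_pr; elim: j => [|j IH] lt_jp; first by rewrite coprimen1.
by rewrite factS coprimeMr IH ?(ltnW lt_jp) // prime_coprime // gtnNdvd.
Qed.

Lemma prod_primes_mid_le j :
  \prod_(j.+2 <= p < j.*2.+2 | prime p) p <= 'C(j.*2.+1, j.+1).
Proof.
set P := \prod_(_ <= p < _ | _) p.
have le_j : j.+1 <= j.*2.+1 by lia.
have split_fact : 'C(j.*2.+1, j.+1) * j`! = \prod_(j.+2 <= k < j.*2.+2) k.
  have := bin_fact le_j; rewrite (_ : j.*2.+1 - j.+1 = j); last by lia.
  by rewrite (fact_split le_j) mulnCA => /eqP; rewrite eqn_pmul2l ?fact_gt0 // => /eqP.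
have dvd_P : P %| 'C(j.*2.+1, j.+1) * j`!.
  by rewrite split_fact [X in _ %| X](bigID prime) /= dvdn_mulr.
have coP : coprime P j`!.
  rewrite /P big_nat_cond; apply: (big_ind (fun x => coprime x j`!)).
  - exact: coprime1n.
  - by move=> x y cx cy; rewrite coprimeMl cx cy.
  by move=> p /andP[/andP[lt_jp _] p_pr]; apply: coprime_fact => //; lia.
rewrite Gauss_dvdl // in dvd_P.
by apply: dvdn_leq dvd_P; rewrite bin_gt0.
Qed.

Lemma bin_odd_mid_le j : 'C(j.*2.+1, j.+1) <= 4 ^ j.
Proof.
have := @leq_bin_exp2 j.*2.+2 j.+1 isT.
have sym : 'C(j.*2.+1, j) = 'C(j.*2.+1, j.+1).
  have := @bin_sub j.*2.+1 j.+1 ltac:(lia).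
  by rewrite (_ : j.*2.+1 - j.+1 = j) //; lia.
rewrite binS sym addnn -mul2n /= expnS leq_pmul2l //.
by rewrite -mul2n expnM.
Qed.

Lemma primorial_le m : \prod_(0 <= p < m.+1 | prime p) p <= 4 ^ m.
Proof.
rewrite big_mkcond /=; elim/ltn_ind: m => m IH.
case: m IH => [|[|[|m]]] IH; try by rewrite unlock.
have [m_odd|m_even] := boolP (odd m).
  have m3_np : ~~ prime m.+3.
    by apply/negP => /prime_oddPn; rewrite /= m_odd => /(_ isT).
  rewrite big_nat_recr //= ifN // muln1.
  by apply: leq_trans (IH m.+2 (ltnSn _)) _; rewrite leq_exp2l.
have [j def_m] : exists j, m.+3 = j.*2.+1.
  by exists m./2.+1; rewrite -[in LHS](odd_double_half m) (negbTE m_even); lia.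
rewrite def_m (@big_cat_nat _ _ _ j.+2) //=; last by lia.
rewrite (_ : 4 ^ j.*2.+1 = 4 ^ j.+1 * 4 ^ j); last by rewrite -expnD; congr (4 ^ _); lia.
apply: leq_mul; first by apply: IH; lia.
by rewrite -big_mkcond (leq_trans (prod_primes_mid_le j)) ?bin_odd_mid_le.
Qed.

Lemma logn_central_bin p n : prime p ->
  logn p 'C(n.*2, n) + 2 * \sum_(1 <= k < n.*2.+1) n %/ p ^ k
  = \sum_(1 <= k < n.*2.+1) n.*2 %/ p ^ k.
Proof.
move=> p_pr; have le_n2n : n <= n.*2 by lia.
have fact_2n := bin_fact le_n2n; rewrite (_ : n.*2 - n = n) in fact_2n; last by lia.
have logn_fact_2n : logn p (n.*2)`! = logn p 'C(n.*2, n) + (logn p n`! + logn p n`!).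
  by rewrite -fact_2n !lognM ?muln_gt0 ?fact_gt0 ?bin_gt0.
have widen : \sum_(1 <= k < n.+1) n %/ p ^ k = \sum_(1 <= k < n.*2.+1) n %/ p ^ k.
  rewrite [RHS](@big_cat_nat _ _ _ n.+1) //=; try lia.
  rewrite [X in _ = _ + X]big1_seq ?addn0 // => k /andP[_].
  rewrite mem_index_iota => /andP[lt_nk _]; rewrite divn_small //.
  by apply: leq_trans lt_nk (ltnW (ltn_expl _ (prime_gt1 p_pr))).
by rewrite !logn_fact // widen in logn_fact_2n; rewrite logn_fact_2n; lia.
Qed.

Lemma divn_double_le d n : 0 < d -> n.*2 %/ d <= (n %/ d).*2.+1.
Proof.
move=> d_gt0; rewrite -ltnS ltn_divLR //.
by have := divn_eq n d; have := ltn_pmod n d_gt0; nia.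
Qed.

Lemma logn_central_bin_le p n : prime p -> 0 < n ->
  logn p 'C(n.*2, n) <= trunc_log p n.*2.
Proof.
move=> p_pr n_gt0; have p_gt1 := prime_gt1 p_pr.
set T := trunc_log p n.*2.
have lt_2n_pT : n.*2 < p ^ T.+1 by apply: trunc_log_ltn.
have le_pT_2n : p ^ T <= n.*2 by apply: trunc_logP => //; lia.
have le_T : T.+1 <= n.*2.+1 by have := ltn_expl T p_gt1; lia.
have tail_eq0 m : m <= n.*2 -> \sum_(T.+1 <= k < n.*2.+1) m %/ p ^ k = 0.
  move=> le_m2n; apply: big1_seq => k /andP[_]; rewrite mem_index_iota.
  case/andP=> lt_Tk _; rewrite divn_small //.
  by apply: leq_ltn_trans le_m2n (leq_trans lt_2n_pT _); rewrite leq_exp2l.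
have := logn_central_bin n p_pr.
rewrite [in LHS](@big_cat_nat _ _ _ T.+1) // [in RHS](@big_cat_nat _ _ _ T.+1) //=.
rewrite !tail_eq0 ?addn0 //; last by lia.
have : \sum_(1 <= k < T.+1) n.*2 %/ p ^ k <= \sum_(1 <= k < T.+1) (2 * (n %/ p ^ k) + 1).
  by apply: leq_sum => k _; rewrite addn1 mul2n divn_double_le // expn_gt0 ltnW.
rewrite big_split /= sum_nat_const_nat -big_distrr /=; lia.
Qed.

Lemma pfactor_central_bin_le p n : prime p -> 0 < n ->
  p ^ logn p 'C(n.*2, n) <= n.*2.
Proof.
move=> p_pr n_gt0; apply: leq_trans (trunc_logP (prime_gt1 p_pr) _); last by lia.
by rewrite leq_exp2l ?prime_gt1 ?logn_central_bin_le.
Qed.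

Lemma logn_central_bin_eq0 p n : prime p -> p <= n -> n.*2 < 3 * p ->
  n.*2 < p * p -> logn p 'C(n.*2, n) = 0.
Proof.
move=> p_pr le_pn lt_2n_3p lt_2n_pp; have p_gt1 := prime_gt1 p_pr.
have := logn_central_bin n p_pr.
suff -> : \sum_(1 <= k < n.*2.+1) n.*2 %/ p ^ k
        = 2 * \sum_(1 <= k < n.*2.+1) n %/ p ^ k by lia.
rewrite big_distrr /=; apply: eq_big_nat => -[|[|k]] // _.
  have div_eq q m : q * p <= m < q.+1 * p -> m %/ p = q.
    by case/andP=> ? ?; apply/eqP; rewrite eqn_leq -ltnS ltn_divLR ?leq_divRL //; lia.
  by rewrite expn1 (div_eq 2) 1?(div_eq 1) //; lia.
have le_pp : p ^ 2 <= p ^ k.+2 by rewrite leq_exp2l.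
by rewrite !divn_small //; lia.
Qed.

Lemma pfactor_central_bin_split p n : prime p -> 0 < n ->
  p ^ logn p 'C(n.*2, n) <=
  (if p * p <= n.*2 then n.*2 else 1) * (if 3 * p <= n.*2 then p else 1)
  * (if n < p then n.*2 else 1).
Proof.
move=> p_pr n_gt0; have p_gt1 := prime_gt1 p_pr.
have le_2n := pfactor_central_bin_le p_pr n_gt0.
set v := logn p _ in le_2n *.
have [le_pp|lt_2n_pp] := leqP (p * p) n.*2.
  rewrite -mulnA; apply: leq_trans le_2n (leq_pmulr _ _).
  by rewrite muln_gt0; case: ifP; case: ifP => //; lia.
have le_v1 : v <= 1.
  rewrite leqNgt; apply/negP => lt1_v.
  by have := leq_pexp2l (ltnW p_gt1) lt1_v; lia.
have le_vp : p ^ v <= p by rewrite -{2}(expn1 p) leq_pexp2l // ltnW.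
have [le_3p|lt_2n_3p] := leqP (3 * p) n.*2.
  by rewrite mul1n; apply: leq_trans le_vp (leq_pmulr _ _); case: ifP; lia.
have [le_pn|lt_np] := leqP p n; last by rewrite !mul1n.
by rewrite /v logn_central_bin_eq0.
Qed.

Lemma central_bin_le n : 0 < n ->
  'C(n.*2, n) <=
  (n.*2) ^ count (fun p => prime p && (p * p <= n.*2)) (iota 0 n.*2.+1)
  * \prod_(0 <= p < (n.*2 %/ 3).+1 | prime p) p
  * (n.*2) ^ count prime (iota n.+1 n).
Proof.
move=> n_gt0; set C := 'C(n.*2, n).
have C_gt0 : 0 < C by rewrite bin_gt0; lia.
have prod_const m1 m2 P c :
    \prod_(m1 <= p < m2 | P p) c = c ^ count P (iota m1 (m2 - m1)).
  by rewrite big_const_seq iter_muln_1.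
have -> : C = \prod_(0 <= p < n.*2.+1 | prime p) p ^ logn p C.
  rewrite -{1}(partnT C_gt0) (widen_partn _ (leq_addr n.*2 C)) [RHS]big_mkcond /=.
  rewrite (@big_cat_nat _ _ _ n.*2.+1) //=; last by lia.
  rewrite [X in _ * X]big1_seq ?muln1 => [|p]; last first.
    rewrite mem_index_iota => /andP[_ /andP[lt_2n_p _]].
    case/boolP: (prime p) => [p_pr|/negbTE np]; last by rewrite lognE np.
    have := logn_central_bin_le p_pr n_gt0.
    have -> : trunc_log p n.*2 = 0 by apply/eqP; rewrite trunc_log_eq0; lia.
    by rewrite leqn0 -/C => /eqP ->.
  apply: eq_bigr => p _; case/boolP: (prime p) => [//|/negbTE np].
  by rewrite lognE np.
apply: leq_trans (leq_prod (fun p p_pr => pfactor_central_bin_split p_pr n_gt0)) _.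
rewrite !big_split /=; apply: leq_mul; first apply: leq_mul.
- by rewrite -big_mkcondr prod_const subn0.
- rewrite -big_mkcondr (@big_nat_widen _ _ _ 0 (n.*2 %/ 3).+1 n.*2.+1) /=; last by lia.
  by apply/eq_leq/eq_bigl => p; rewrite ltnS leq_divRL // mulnC.
rewrite -big_mkcondr -(@big_nat_widenl _ _ _ n.+1 0) // prod_const.
by rewrite (_ : n.*2.+1 - n.+1 = n) //; lia.
Qed.

Lemma count_prime_sq_le m c : m < c * c ->
  count (fun p => prime p && (p * p <= m)) (iota 0 m.+1) <= c.
Proof.
move=> lt_m_cc.
apply: leq_trans (@sub_count _ _ (fun p => p < c) _ _) _.
  move=> p /andP[_ le_pp] /=; rewrite ltnNge; apply/negP => le_cp.
  by have := leq_mul le_cp le_cp; lia.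
rewrite -size_filter -{2}(size_iota 0 c); apply: uniq_leq_size.
  exact/filter_uniq/iota_uniq.
by move=> p; rewrite mem_filter !mem_iota => /andP[lt_pc _].
Qed.

(* Erdos's proof of Bertrand's postulate, keeping track of the number of primes. *)
Lemma count_primes_between_lb n K c : 0 < n -> n.*2 < 2 ^ K -> n.*2 < c * c ->
  n.*2 <= 3 * K * (1 + c + count prime (iota n.+1 n)).
Proof.
move=> n_gt0 lt_2n_2K lt_2n_cc.
set s := count (fun p => prime p && (p * p <= n.*2)) (iota 0 n.*2.+1).
set t := count prime (iota n.+1 n).
have le_sc : s <= c := count_prime_sq_le lt_2n_cc.
have le_2n_2K : n.*2 <= 2 ^ K by apply: ltnW.
have exp4 m : 4 ^ m = 2 ^ m.*2 by rewrite -mul2n expnM.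
have : 4 ^ n <= 2 ^ K * ((2 ^ K) ^ c * 4 ^ (n.*2 %/ 3) * (2 ^ K) ^ t).
  apply: leq_trans (exp4_le_central_bin n) (leq_mul lt_2n_2K _).
  apply: leq_trans (central_bin_le n_gt0) _.
  apply: leq_mul; first apply: leq_mul; rewrite ?primorial_le ?leq_expn2r //.
  by apply: leq_trans (leq_expn2r _ le_2n_2K) _; rewrite leq_pexp2l ?expn_gt0.
rewrite !exp4 -!expnM -!expnD leq_exp2l // => le_exps.
have := leq_divM n.*2 3; nia.
Qed.

Lemma double_leq_exp2 u : 0 < u -> u.*2 <= 2 ^ u.
Proof. by elim: u => [//|[|u] IH _ //]; rewrite expnS; have := IH isT; lia. Qed.

Lemma exp2_dominates d c : exists K0, forall K, K0 <= K -> c * K ^ d < 2 ^ K.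
Proof.
elim: d c => [|d IH] c.
  exists c => K le_cK; rewrite expn0 muln1.
  by apply: leq_trans (ltn_expl c (isT : 1 < 2)) _; rewrite leq_exp2l.
have [M0 dom_M0] := IH (c * 3 ^ d).
exists M0.+1.*2 => K le_K.
set m := K./2; set u := K - m.
have lt_M0_m : M0 < m by rewrite /m; lia.
have le_K_3m : K <= 3 * m by rewrite /m; lia.
have le_K_2u : K <= u.*2 by rewrite /u /m; lia.
have split_K : 2 ^ K = 2 ^ u * 2 ^ m by rewrite -expnD /u /m; congr (2 ^ _); lia.
have le_K_exp : K <= 2 ^ u by apply: leq_trans le_K_2u (double_leq_exp2 _); lia.
have le_cK : c * K ^ d <= c * 3 ^ d * m ^ d.
  by rewrite -mulnA -expnMn leq_mul2l leq_expn2r ?orbT.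
rewrite expnS mulnCA split_K.
apply: leq_ltn_trans (leq_mul le_K_exp le_cK) _.
by rewrite ltn_mul2l expn_gt0 /= dom_M0 // ltnW.
Qed.

Lemma polylog_le_count_primes d c : exists N0, forall N, N0 <= N ->
  c * (trunc_log 2 N).+1 ^ d <= count prime (iota (N %/ 4).+1 (N %/ 4)).
Proof.
(* With n = N/4 and 2^(K-1) <= N < 2^K, count_primes_between_lb for c = 2^(K - K/2)
   bounds 2^K by 12 K (1 + 2^(K - K/2) + count) + 6; each summand is below 2^K/4. *)
have [A dom_A] := exp2_dominates 1 48.
have [B dom_B] := exp2_dominates 1 144.
have [D dom_D] := exp2_dominates d.+1 (48 * c).
exists (2 ^ (A + B.*2 + D + 5)) => N le_N.
set K := (trunc_log 2 N).+1; set n := N %/ 4; set t := count prime _.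
have le_K : A + B.*2 + D + 5 <= K.-1 by apply: trunc_log_max.
have N_gt0 : 0 < N by apply: leq_trans le_N; rewrite expn_gt0.
have lt_N_2K : N < 2 ^ K by apply: trunc_log_ltn.
have le_2K_2N : 2 ^ K <= N.*2 by rewrite expnS mul2n leq_double trunc_logP.
have ge_2K : 2 ^ 5 <= 2 ^ K by rewrite leq_exp2l //; lia.
rewrite leqNgt; apply/negP => lt_t.
set m := K./2; set h := K - m.
have split_K : 2 ^ K = 2 ^ h * 2 ^ m by rewrite -expnD /h /m; congr (2 ^ _); lia.
have le_2K_2h : 2 ^ K <= 2 ^ h * 2 ^ h by rewrite split_K leq_mul2l leq_exp2l ?orbT //; lia.
have lb := @count_primes_between_lb n K (2 ^ h) ltac:(lia) ltac:(lia) ltac:(lia).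
have dom_1 : 48 * K < 2 ^ K by have := dom_A K ltac:(lia); rewrite expn1.
have dom_2 : 48 * c * K ^ d.+1 < 2 ^ K by apply: dom_D; lia.
have dom_3 : 48 * (K * 2 ^ h) < 2 ^ K.
  have := dom_B m ltac:(rewrite /m; lia); rewrite expn1 split_K (mulnC (2 ^ h)) mulnA.
  move=> dom_m; rewrite ltn_pmul2r ?expn_gt0 //.
  by apply: leq_ltn_trans dom_m; rewrite /m; lia.
have le_Kt : K * t <= c * K ^ d.+1.
  by rewrite expnS mulnCA leq_mul2l ltnW ?orbT.
rewrite !mulnDr muln1 -mulnA in lb; lia.
Qed.

(** * Smooth numbers and the Chinese remainder theorem *)

Fixpoint smooth_prods (M : seq nat) (K : nat) : seq nat :=
  if M is q :: M' then [seq q ^ e * t | e <- iota 0 K, t <- smooth_prods M' K]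
  else [:: 1].

Lemma size_smooth_prods M K : size (smooth_prods M K) = K ^ size M.
Proof. by elim: M => //= q M IH; rewrite size_allpairs size_iota IH expnS. Qed.

Lemma mem_smooth_prods M K s : uniq M -> all prime M -> 0 < s -> s < 2 ^ K ->
  (forall q, prime q -> q %| s -> q \in M) -> s \in smooth_prods M K.
Proof.
elim: M s => [|q M IH] s /= uniq_M M_pr s_gt0 lt_s_2K s_M.
  case: (ltngtP s 1) => [|gt1_s|->]; [lia| |by rewrite inE].
  by have := s_M _ (pdiv_prime gt1_s) (pdiv_dvd s).
case/andP: uniq_M => qM uniq_M; case/andP: M_pr => q_pr M_pr.
have [m co_qm def_s] := pfactor_coprime q_pr s_gt0.
set e := logn q s in def_s.
have m_gt0 : 0 < m by move: s_gt0; rewrite def_s muln_gt0 => /andP[].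
have lt_eK : e < K.
  have le_qe_s : q ^ e <= s by rewrite def_s leq_pmull.
  have le_2K_qK : 2 ^ K <= q ^ K by apply/leq_expn2r/prime_gt1.
  by rewrite -(ltn_exp2l _ _ (prime_gt1 q_pr)); lia.
rewrite def_s mulnC; apply: allpairs_f; first by rewrite mem_iota.
apply: IH => //.
  by apply: leq_ltn_trans lt_s_2K; rewrite def_s leq_pmulr ?expn_gt0 ?prime_gt0.
move=> r r_pr dvd_rm.
have : r \in q :: M by apply: s_M r_pr _; rewrite def_s dvdn_mulr.
rewrite inE => /orP[/eqP def_r|//].
by move: co_qm; rewrite prime_coprime // -def_r dvd_rm.
Qed.

Lemma chinese_remainder_seq (L : seq (nat * nat)) :
  uniq (unzip1 L) -> all prime (unzip1 L) ->
  exists c, forall q, q \in L -> q.1 %| c + q.2.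
Proof.
elim: L => [|[p x] L IH] /= uniq_L L_pr; first by exists 0.
case/andP: uniq_L => pL uniq_L; case/andP: L_pr => p_pr L_pr.
have [c dvd_c] := IH uniq_L L_pr.
set P := \prod_(q <- L) q.1.
have co_pP : coprime p P.
  rewrite /P big_seq; apply: (big_ind (coprime p)) => [|y z|q qL].
  - exact: coprimen1.
  - by rewrite coprimeMr => -> ->.
  rewrite prime_coprime // dvdn_prime2 //; last by move/allP: L_pr; apply; exact: map_f.
  by apply: contraNneq pL => ->; exact: map_f.
set c' := chinese p P (p - x %% p) c.
exists c' => q; rewrite inE => /orP[/eqP -> /= | qL].
  rewrite /dvdn -modnDml chinese_modl // modnDml -modnDmr subnK ?modnn //.
  exact/ltnW/ltn_pmod/prime_gt0.
have dvd_qP : q.1 %| P by rewrite /P (bigD1_seq q) //= ?dvdn_mulr // (map_uniq uniq_L).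
rewrite /dvdn -modnDml -(modn_dvdm c' dvd_qP) chinese_modr // modn_dvdm // modnDml.
exact: dvd_c.
Qed.

(** * Covering a block of consecutive integers *)

Lemma odd_distn (m n : nat) : odd `|m - n| = odd m (+) odd n.
Proof.
have [le_nm|lt_mn] := leqP n m; first by rewrite distnEl // oddB.
by rewrite (distnEr (ltnW lt_mn)) (oddB (ltnW lt_mn)) addbC.
Qed.

Definition large_primes N := [seq r <- iota (N %/ 4).+1 (N %/ 4) | prime r].

Lemma mem_large_primes N r : r \in large_primes N -> [/\ prime r, N %/ 4 < r & r.*2 <= N].
Proof. by rewrite mem_filter mem_iota => /andP[-> /andP[? ?]]; split => //; lia. Qed.

Definition center N := N.-1./2.
Definition radius N := N.-1 - center N.

Section Covering.

Variables (M : seq nat) (N : nat).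
Hypothesis M_odd_primes : forall q, q \in M -> prime q /\ odd q.
Implicit Types c i p r : nat.

Definition small_primes :=
  [seq p <- iota 0 N | [&& prime p, odd p, p \notin M & p.*2 <= radius N]].

(* Positions covered neither by 2 nor by a small prime; each needs a prime of its own. *)
Definition is_target (i : nat) :=
  ~~ odd `|i - center N| && ~~ has (fun p => p %| `|i - center N|) small_primes.

Definition targets := [seq i <- iota 0 N | is_target i].

Definition covered c i := exists p j,
  [/\ prime p, p \notin M, j < N, j != i & (p %| c + i) && (p %| c + j)].

Lemma two_notin_M : 2 \notin M.
Proof. by apply/negP => /M_odd_primes[]. Qed.

Lemma target_prime_factor i r : is_target i -> 0 < `|i - center N| -> i < N ->
  prime r -> r %| `|i - center N| -> r \in 2 :: M.
Proof.
move=> /andP[even_d no_small] d_gt0 lt_iN r_pr dvd_rd.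
rewrite inE; case: (eqVneq r 2) => //= r_neq2.
apply: contraNT no_small => rM; apply/hasP; exists r => //.
have r_odd : odd r by apply: contraNT r_neq2 => /(prime_oddPn r_pr) ->.
have dvd_2r : 2 * r %| `|i - center N|.
  have co_2r : coprime 2 r by rewrite prime_coprime // dvdn_prime2 // eq_sym.
  by rewrite Gauss_dvd // dvdn2 even_d dvd_rd.
have := dvdn_leq d_gt0 dvd_2r; have := dvdn_leq d_gt0 dvd_rd.
rewrite mem_filter mem_iota r_pr r_odd rM /radius /center; lia.
Qed.

Hypothesis M_uniq : uniq M.

Lemma size_targets : size targets <= 2 * (trunc_log 2 N).+1 ^ (size M).+1 + 2.
Proof.
set K := (trunc_log 2 N).+1; set W := center N.
set V := 0 :: smooth_prods (2 :: M) K.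
have lt_N_2K : N < 2 ^ K by apply: trunc_log_ltn.
have dist_V i : i \in targets -> `|i - W| \in V.
  rewrite mem_filter mem_iota => /andP[iT /andP[_ lt_iN]].
  rewrite /V inE; case: posnP => [-> //|d_gt0]; apply/orP; right.
  apply: (mem_smooth_prods _ _ d_gt0).
  - by rewrite /= M_uniq two_notin_M.
  - by apply/allP => q; rewrite inE => /orP[/eqP -> //|/M_odd_primes[]].
  - by apply: leq_ltn_trans lt_N_2K; rewrite /W /center; lia.
  by move=> r r_pr dvd_r; exact: target_prime_factor iT d_gt0 lt_iN r_pr dvd_r.
set S := [seq W + v | v <- V] ++ [seq W - v | v <- V].
have sub_S : {subset targets <= S}.
  move=> i iT; have := dist_V i iT; rewrite mem_cat.
  have [le_Wi|lt_iW] := leqP W i.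
    by rewrite distnEl // => dV; apply/orP; left; apply/mapP; exists (i - W) => //; lia.
  rewrite (distnEr (ltnW lt_iW)) => dV.
  by apply/orP; right; apply/mapP; exists (W - i) => //; lia.
have size_V : size V = (K ^ (size M).+1).+1 by rewrite -(size_smooth_prods (2 :: M)).
have uniq_T : uniq targets := filter_uniq _ (iota_uniq 0 N).
have := uniq_leq_size uniq_T sub_S.
by rewrite size_cat !size_map size_V => /leq_trans-> //; lia.
Qed.

Lemma covered_of_dvd c i p : prime p -> p \notin M -> i < N ->
  p <= i \/ i + p < N -> p %| c + i -> covered c i.
Proof.
move=> p_pr pM lt_iN range dvd_p; have p_gt0 := prime_gt0 p_pr.
exists p, (if p <= i then i - p else i + p); split => //.
- by case: (leqP p i) => le_pi; lia.
- by case: (leqP p i) => le_pi; apply/eqP; lia.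
rewrite dvd_p /=; case: (leqP p i) => [le_pi|_]; last by rewrite addnA dvdn_addl.
have -> : c + (i - p) = c + i - p by lia.
exact: dvdn_sub.
Qed.

Lemma covered_odd_dist c i : 3 < N -> i < N ->
  odd (c + center N) -> odd `|i - center N| -> covered c i.
Proof.
move=> lt_3N lt_iN odd_cW odd_d.
apply: (covered_of_dvd (isT : prime 2) two_notin_M lt_iN); first lia.
move: odd_d odd_cW; rewrite odd_distn dvdn2 !oddD.
by case: (odd c); case: (odd i); case: (odd (center N)).
Qed.

Lemma covered_small_prime c i p : p \in small_primes -> i < N ->
  p %| c + center N -> p %| `|i - center N| -> covered c i.
Proof.
rewrite mem_filter mem_iota => /andP[/and4P[p_pr _ pM le_2p_R] _] lt_iN dvd_cW dvd_d.
apply: (covered_of_dvd p_pr pM lt_iN).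
  have p_gt0 := prime_gt0 p_pr; have lt_WN : center N < N by rewrite /center; lia.
  move: le_2p_R dvd_d; rewrite /radius.
  have [le_Wi|lt_iW] := leqP (center N) i; last first.
    have d_gt0 : 0 < center N - i by lia.
    by rewrite (distnEr (ltnW lt_iW)) => _ /(dvdn_leq d_gt0); lia.
  rewrite distnEl //; case: (posnP (i - center N)) => [|d_gt0 _ /(dvdn_leq d_gt0)]; lia.
have [le_Wi|lt_iW] := leqP (center N) i.
  rewrite distnEl // in dvd_d.
  have -> : c + i = c + center N + (i - center N) by lia.
  exact: dvdn_add.
rewrite (distnEr (ltnW lt_iW)) in dvd_d.
have -> : c + i = c + center N - (center N - i) by lia.
exact: dvdn_sub.
Qed.

Lemma all_covered c : 3 < N -> odd (c + center N) ->
  {in small_primes, forall p, p %| c + center N} ->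
  {in targets, forall i, exists2 r, [&& prime r, r \notin M & r.*2 <= N] & r %| c + i} ->
  forall i, i < N -> covered c i.
Proof.
move=> lt_3N odd_cW small_dvd target_dvd i lt_iN.
have [odd_d|even_d] := boolP (odd `|i - center N|); first exact: covered_odd_dist.
have [/hasP[p pS dvd_pd]|no_small] :=
  boolP (has (fun p => p %| `|i - center N|) small_primes).
  by apply: covered_small_prime dvd_pd => //; apply: small_dvd.
have iT : i \in targets by rewrite mem_filter /is_target even_d no_small mem_iota.
have [r /and3P[r_pr rM le_2r_N] dvd_r] := target_dvd i iT.
by apply: (covered_of_dvd r_pr rM lt_iN _ dvd_r); lia.
Qed.

Lemma mem_small_primes p : p \in small_primes -> [/\ prime p, odd p & p <= N %/ 4].
Proof.
rewrite mem_filter => /andP[/and4P[-> -> _]]; rewrite /radius /center => ? _.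
by split => //; rewrite leq_divRL //; lia.
Qed.

Lemma prime_moduli n : 7 < N ->
  let P := 2 :: small_primes ++ take n (large_primes N) in uniq P && all prime P.
Proof.
move=> lt_7N; apply/andP; split; last first.
  by rewrite /= all_cat; apply/andP; split; apply/allP => x;
    [case/mem_small_primes | move/mem_take/mem_large_primes => []].
rewrite /= mem_cat cat_uniq negb_or; apply/and4P; split.
- apply/andP; split; apply/negP; first by case/mem_small_primes.
  by move/mem_take/mem_large_primes => [_ lt_2]; lia.
- exact/filter_uniq/iota_uniq.
- apply/hasPn => r /mem_take/mem_large_primes[_ lt_r _].
  by apply/negP => /mem_small_primes[_ _]; lia.
exact/take_uniq/filter_uniq/iota_uniq.
Qed.

Lemma exists_covering_shift : 8 + 4 * \max_(q <- M) q <= N ->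
  size targets <= size (large_primes N) -> exists c, forall i, i < N -> covered c i.
Proof.
move=> large_N le_TF.
set W := center N; set T := targets; set F := take (size T) (large_primes N).
have size_F : size F = size T by apply: size_takel.
(* A pair (q, x) in L asks for q %| c + x. *)
set L := (2, W.+1) :: [seq (p, W) | p <- small_primes] ++ zip F T.
have unzip1_L : unzip1 L = 2 :: small_primes ++ F.
  rewrite /L /=; congr (_ :: _); rewrite /unzip1 map_cat -map_comp map_id.
  by rewrite -/(unzip1 (zip F T)) unzip1_zip ?size_F.
have [c dvd_c] : exists c, forall q, q \in L -> q.1 %| c + q.2.
  have /andP[] := @prime_moduli (size T) ltac:(lia).
  by rewrite -unzip1_L; apply: chinese_remainder_seq.
exists c; apply: all_covered; first lia.
- by have := dvd_c (2, W.+1); rewrite inE eqxx addnS dvdn2 /= negbK => ->.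
- by move=> p pS; apply: (dvd_c (p, W)); rewrite inE mem_cat (map_f (pair^~ W) pS) orbT.
move=> i iT; set j := index i T.
have lt_jT : j < size T by rewrite index_mem.
have lt_jF : j < size F by rewrite size_F.
set r := nth 0 F j.
have [r_pr lt_r le_2r] : [/\ prime r, N %/ 4 < r & r.*2 <= N].
  exact: mem_large_primes (mem_take (mem_nth 0 lt_jF)).
exists r.
  rewrite r_pr le_2r andbT; apply/negP => rM.
  have : r <= \max_(q <- M) q by apply: leq_bigmax_seq.
  lia.
have mem_pair : (r, nth 0 T j) \in zip F T.
  by rewrite -nth_zip ?size_F // mem_nth // size_zip size_F minnn.
have := dvd_c (r, nth 0 T j).
by rewrite inE mem_cat mem_pair !orbT /= nth_index //; apply.
Qed.

End Covering.

Lemma eventually_exists_covering_shift M :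
  uniq M -> (forall q, q \in M -> prime q /\ odd q) ->
  exists nM, forall N, nM <= N -> exists c, forall i, i < N -> covered M N c i.
Proof.
move=> M_uniq M_odd_primes.
have [N0 many_primes] := polylog_le_count_primes (size M).+1 4.
exists (N0 + 4 * \max_(q <- M) q + 8) => N le_N.
apply: exists_covering_shift => //.
  by apply: leq_trans le_N; rewrite addnC leq_add2r leq_addl.
rewrite /large_primes size_filter.
apply: leq_trans (@size_targets M N M_odd_primes M_uniq) _.
apply: leq_trans (many_primes N _); last lia.
by rewrite -[4]/(2 + 2) mulnDl leq_add2l leq_pmulr // expn_gt0.
Qed.

Lemma dvdz_gcd_prod_others (c N i j p : nat) : j < N -> j != i ->
  p %| c + i -> p %| c + j -> (p%:Z %| gcdz (c%:Z + i%:Z) (prod_others c%:Z N i))%Z.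
Proof.
move=> lt_jN neq_ji dvd_i dvd_j.
rewrite dvdz_gcd -PoszD dvdzE dvd_i /= /prod_others (bigD1 (Ordinal lt_jN)) //=.
by rewrite dvdz_mulr // -PoszD dvdzE.
Qed.

Local Open Scope ring_scope.

Theorem theorem2p1 (M : seq nat)
  (hM_uniq : uniq M) (hk : (0 < size M)%N)
  (hM_odd_prime : forall q, q \in M -> prime q /\ odd q) :
  exists nM : nat, forall N : nat, (nM <= N)%N ->
    exists a : int, forall i : nat, (i < N)%N ->
      gcdz (a + i%:Z) (prod_others a N i) != 1 /\
      exists p : nat, [/\ prime p, p \notin M &
        (p%:Z %| gcdz (a + i%:Z) (prod_others a N i))%Z].
Proof.
have [nM covered_nM] := eventually_exists_covering_shift hM_uniq hM_odd_prime.
exists nM => N le_N; have [c covered_c] := covered_nM N le_N.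
exists c%:Z => i lt_iN.
have [p [j [p_pr pM lt_jN neq_ji /andP[dvd_i dvd_j]]]] := covered_c i lt_iN.
have dvd_gcd := dvdz_gcd_prod_others lt_jN neq_ji dvd_i dvd_j.
split; last by exists p.
apply: contraTneq dvd_gcd => ->; rewrite dvdz1 /=.
by apply: contraTneq (prime_gt1 p_pr) => ->.
Qed.
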